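(* Let $r_V,r_A,a_1,a_2,b_1,b_2,c_V,c_A,K_{V,1},K_{V,2},K_{A,1},K_{A,2}>0$, $n>1$, $\mu_{V,1},\mu_{V,2},\mu_{A,1},\mu_{A,2}>0$, $d_{V,12},d_{V,21},d_{A,12},d_{A,21}>0$ and $\alpha_1,\alpha_2\in(0,1)$. For $i\ne j\in\{1,2\}$ put $d_{V,ij}'=d_{V,ij}\frac{\alpha_i^n}{\alpha_i^n+c_V^n}$, $d_{A,ij}'=d_{A,ij}\frac{\alpha_i^n}{\alpha_i^n+c_A^n}$, $K_{A,i}'=(1-\alpha_i)K_{A,i}$, and consider on $\mathbb{R}_+^4$ the system (for $i\ne j$) $$\begin{aligned} \dot V_i&=r_V\tfrac{A_i}{A_i+a_i}V_i\big(1-\tfrac{V_i}{K_{V,i}}\big)-d_{V,ij}'\tfrac{1}{1+b_iA_i}V_i+d_{V,ji}'\tfrac{1}{1+b_jA_j}V_j-\mu_{V,i}V_i,\\ \dot A_i&=r_AA_i\big(1-\tfrac{A_i}{K_{A,i}'}\big)-d_{A,ij}'A_i+d_{A,ji}'A_j-\mu_{A,i}A_i . \end{aligned}$$ Define $\mathcal{Q}_{0A,1}=\frac{r_A}{\mu_{A,1}+d_{A,12}'}$, $\mathcal{Q}_{0A,2}=\frac{r_A}{\mu_{A,2}+d_{A,21}'}$, $$\bar r_A=\tfrac{1}{2}(d_{A,12}'+\mu_{A,1}+d_{A,21}'+\mu_{A,2}),\quad \Delta_{r_A}=(d_{A,21}'-d_{A,12}'+\mu_{A,2}-\mu_{A,1})^2+4d_{A,21}'d_{A,12}',\quad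 r_{A,\min}=\bar r_A-\tfrac12\sqrt{\Delta_{r_A}}.$$ Then: 1. $E_{0000}=(0,0,0,0)$ is an equilibrium for all parameter values, and it is locally asymptotically stable (LAS) if $r_A<r_{A,\min}$. 2. If $\mathcal{Q}_{0A,1}\ge 1$ or $\mathcal{Q}_{0A,2}\ge 1$, there exists at least one equilibrium of the form $E_{0A_10A_2}=(0,A_{1,+},0,A_{2,+})$ with $A_{1,+},A_{2,+}>0$. Any such equilibrium is LAS if $B_1<0$ and $B_2>0$, where, with $j_{11}=r_V\frac{A_{1,+}}{A_{1,+}+a_1}-\frac{d_{V,12}'}{1+b_1A_{1,+}}-\mu_{V,1}$ and $j_{33}=r_V\frac{A_{2,+}}{A_{2,+}+a_2}-\frac{d_{V,21}'}{1+b_2A_{2,+}}-\mu_{V,2}$, $$B_1=j_{11}+j_{33},\qquad B_2=j_{11}j_{33}-\frac{d_{V,21}'}{1+b_2A_{2,+}}\cdot\frac{d_{V,12}'}{1+b_1A_{1,+}}.$$ 3. Suppose $\mathcal{Q}_{0A,1}\ge1$ or $\mathcal{Q}_{0A,2}\ge 1$, let $(A_{1,+},A_{2,+})$ with $A_{1,+},A_{2,+}>0$ be such that $(0,A_{1,+},0,A_{2,+})$ is an equilibrium, and set $$\mathcal{S}_{0V,1}=\frac{r_V\frac{A_{1,+}}{A_{1,+}+a_1}}{\frac{d_{V,12}'}{1+b_1A_{1,+}}+\mu_{V,1}},\qquad \mathcal{S}_{0V,2}=\frac{r_V\frac{A_{2,+}}{A_{2,+}+a_2}}{\frac{d_{V,21}'}{1+b_2A_{2,+}}+\mu_{V,2}}.$$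 If $\mathcal{S}_{0V,1}\ge1$ or $\mathcal{S}_{0V,2}\ge1$, there exists at least one coexistence equilibrium $E=(V_{1,+},A_{1,+},V_{2,+},A_{2,+})$ with all components positive. Such an equilibrium $E=(V_1,A_1,V_2,A_2)$ is LAS whenever $C_1>0$ and $C_2>0$, where $$J_{11}=-r_V\tfrac{A_1}{A_1+a_1}\tfrac{V_1}{K_{V,1}}-\tfrac{d_{V,21}'}{1+b_2A_2}\tfrac{V_2}{V_1},\quad J_{13}=\tfrac{d_{V,21}'}{1+b_2A_2},\quad J_{22}=-r_A\tfrac{A_1}{K_{A,1}'}-d_{A,21}'\tfrac{A_2}{A_1},\quad J_{24}=d_{A,21}',$$ $$J_{31}=\tfrac{d_{V,12}'}{1+b_1A_1},\quad J_{33}=-r_V\tfrac{A_2}{A_2+a_2}\tfrac{V_2}{K_{V,2}}-\tfrac{d_{V,12}'}{1+b_1A_1}\tfrac{V_1}{V_2},\quad J_{42}=d_{A,12}',\quad J_{44}=-r_A\tfrac{A_2}{K_{A,2}'}-d_{A,12}'\tfrac{A_1}{A_2},$$ $$P=-J_{42}J_{24}+J_{44}J_{33}+J_{44}J_{22}+J_{44}J_{11}-J_{31}J_{13}+J_{33}J_{22}+J_{33}J_{11}+J_{22}J_{11},$$ $$N=J_{42}J_{24}J_{33}+J_{42}J_{24}J_{11}+J_{44}J_{31}J_{13}-J_{44}J_{33}J_{22}-J_{44}J_{33}J_{11}-J_{44}J_{22}J_{11}+J_{31}J_{13}J_{22}-J_{33}J_{22}J_{11},$$ $$C_3=-J_{44}-J_{33}-J_{22}-J_{11},\qquad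 C_4=J_{42}J_{24}J_{31}J_{13}-J_{42}J_{24}J_{33}J_{11}-J_{44}J_{31}J_{13}J_{22}+J_{44}J_{33}J_{22}J_{11},$$ $$C_1=P-\frac{N}{C_3},\qquad C_2=N-\frac{C_3\,C_4}{C_1}.$$
   Context: This is a two-patch vector ($V_i$)–animal ($A_i$) model with two-way, anthropization-dependent migration; $\alpha_i$ is the anthropization level of patch $i$. LAS means locally asymptotically stable. *)

From Stdlib Require Import Reals Lra.
From Coquelicot Require Import Coquelicot.
Open Scope R_scope.

Record params := Params {
  rV : R; rA : R; a1 : R; a2 : R; b1 : R; b2 : R; cV : R; cA : R;
  KV1 : R; KV2 : R; KA1 : R; KA2 : R; nexp : R;
  muV1 : R; muV2 : R; muA1 : R; muA2 : R;
  dV12 : R; dV21 : R; dA12 : R; dA21 : R;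
  al1 : R; al2 : R }.

Definition admissible (p : params) : Prop :=
  0 < rV p /\ 0 < rA p /\ 0 < a1 p /\ 0 < a2 p /\ 0 < b1 p /\ 0 < b2 p /\
  0 < cV p /\ 0 < cA p /\ 0 < KV1 p /\ 0 < KV2 p /\ 0 < KA1 p /\ 0 < KA2 p /\
  1 < nexp p /\
  0 < muV1 p /\ 0 < muV2 p /\ 0 < muA1 p /\ 0 < muA2 p /\
  0 < dV12 p /\ 0 < dV21 p /\ 0 < dA12 p /\ 0 < dA21 p /\
  0 < al1 p < 1 /\ 0 < al2 p < 1.

(* Anthropization-dependent migration rates and carrying capacities.
   x^n for real n is Rpower x n (x > 0). *)
Definition dVp12 p := dV12 p * (Rpower (al1 p) (nexp p) / (Rpower (al1 p) (nexp p) + Rpower (cV p) (nexp p))).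
Definition dVp21 p := dV21 p * (Rpower (al2 p) (nexp p) / (Rpower (al2 p) (nexp p) + Rpower (cV p) (nexp p))).
Definition dAp12 p := dA12 p * (Rpower (al1 p) (nexp p) / (Rpower (al1 p) (nexp p) + Rpower (cA p) (nexp p))).
Definition dAp21 p := dA21 p * (Rpower (al2 p) (nexp p) / (Rpower (al2 p) (nexp p) + Rpower (cA p) (nexp p))).
Definition KAp1 p := (1 - al1 p) * KA1 p.
Definition KAp2 p := (1 - al2 p) * KA2 p.

Record state := St { sV1 : R; sA1 : R; sV2 : R; sA2 : R }.

Definition fV1 p (x : state) : R :=
  rV p * (sA1 x / (sA1 x + a1 p)) * sV1 x * (1 - sV1 x / KV1 p)
  - dVp12 p * (1 / (1 + b1 p * sA1 x)) * sV1 x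
  + dVp21 p * (1 / (1 + b2 p * sA2 x)) * sV2 x
  - muV1 p * sV1 x.
Definition fV2 p (x : state) : R :=
  rV p * (sA2 x / (sA2 x + a2 p)) * sV2 x * (1 - sV2 x / KV2 p)
  - dVp21 p * (1 / (1 + b2 p * sA2 x)) * sV2 x
  + dVp12 p * (1 / (1 + b1 p * sA1 x)) * sV1 x
  - muV2 p * sV2 x.
Definition fA1 p (x : state) : R :=
  rA p * sA1 x * (1 - sA1 x / KAp1 p) - dAp12 p * sA1 x + dAp21 p * sA2 x
  - muA1 p * sA1 x.
Definition fA2 p (x : state) : R :=
  rA p * sA2 x * (1 - sA2 x / KAp2 p) - dAp21 p * sA2 x + dAp12 p * sA1 x
  - muA2 p * sA2 x.

Definition equilibrium p (E : state) : Prop :=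
  fV1 p E = 0 /\ fA1 p E = 0 /\ fV2 p E = 0 /\ fA2 p E = 0.

Definition nonneg (x : state) : Prop :=
  0 <= sV1 x /\ 0 <= sA1 x /\ 0 <= sV2 x /\ 0 <= sA2 x.

Definition sdist (x y : state) : R :=
  Rmax (Rmax (Rabs (sV1 x - sV1 y)) (Rabs (sA1 x - sA1 y)))
       (Rmax (Rabs (sV2 x - sV2 y)) (Rabs (sA2 x - sA2 y))).

(* x is a solution of the system on [0, +oo). (A two-sided derivative at
   t = 0 is no restriction: any solution on [0,+oo) extends to the left.) *)
Definition solution p (x : R -> state) : Prop :=
  forall t, 0 <= t ->
    is_derive (fun s => sV1 (x s)) t (fV1 p (x t)) /\
    is_derive (fun s => sA1 (x s)) t (fA1 p (x t)) /\
    is_derive (fun s => sV2 (x s)) t (fV2 p (x t)) /\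
    is_derive (fun s => sA2 (x s)) t (fA2 p (x t)).

Definition LAS p (E : state) : Prop :=
  equilibrium p E /\
  (forall eps, 0 < eps -> exists delta, 0 < delta /\
     forall x, solution p x -> nonneg (x 0) -> sdist (x 0) E < delta ->
       forall t, 0 <= t -> sdist (x t) E < eps) /\
  (exists delta, 0 < delta /\
     forall x, solution p x -> nonneg (x 0) -> sdist (x 0) E < delta ->
       is_lim (fun t => sdist (x t) E) p_infty 0).

Definition Q0A1 p := rA p / (muA1 p + dAp12 p).
Definition Q0A2 p := rA p / (muA2 p + dAp21 p).
Definition rA_bar p := / 2 * (dAp12 p + muA1 p + dAp21 p + muA2 p).
Definition Delta_rA p :=
  (dAp21 p - dAp12 p + muA2 p - muA1 p) ^ 2 + 4 * dAp21 p * dAp12 p.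
Definition rA_min p := rA_bar p - / 2 * sqrt (Delta_rA p).

Definition j11 p A1 := rV p * (A1 / (A1 + a1 p)) - dVp12 p / (1 + b1 p * A1) - muV1 p.
Definition j33 p A2 := rV p * (A2 / (A2 + a2 p)) - dVp21 p / (1 + b2 p * A2) - muV2 p.
Definition mB1 p A1 A2 := j11 p A1 + j33 p A2.
Definition mB2 p A1 A2 :=
  j11 p A1 * j33 p A2 - dVp21 p / (1 + b2 p * A2) * (dVp12 p / (1 + b1 p * A1)).

Definition S0V1 p A1 := (rV p * (A1 / (A1 + a1 p))) / (dVp12 p / (1 + b1 p * A1) + muV1 p).
Definition S0V2 p A2 := (rV p * (A2 / (A2 + a2 p))) / (dVp21 p / (1 + b2 p * A2) + muV2 p).

Section Coex.
Variable p : params.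
Variable E : state.
Let V1 := sV1 E. Let A1 := sA1 E. Let V2 := sV2 E. Let A2 := sA2 E.
Definition J11 := - rV p * (A1 / (A1 + a1 p)) * (V1 / KV1 p) - dVp21 p / (1 + b2 p * A2) * (V2 / V1).
Definition J13 := dVp21 p / (1 + b2 p * A2).
Definition J22 := - rA p * (A1 / KAp1 p) - dAp21 p * (A2 / A1).
Definition J24 := dAp21 p.
Definition J31 := dVp12 p / (1 + b1 p * A1).
Definition J33 := - rV p * (A2 / (A2 + a2 p)) * (V2 / KV2 p) - dVp12 p / (1 + b1 p * A1) * (V1 / V2).
Definition J42 := dAp12 p.
Definition J44 := - rA p * (A2 / KAp2 p) - dAp12 p * (A1 / A2).
Definition Pc := - J42 * J24 + J44 * J33 + J44 * J22 + J44 * J11 - J31 * J13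
                 + J33 * J22 + J33 * J11 + J22 * J11.
Definition Nc := J42 * J24 * J33 + J42 * J24 * J11 + J44 * J31 * J13
                 - J44 * J33 * J22 - J44 * J33 * J11 - J44 * J22 * J11
                 + J31 * J13 * J22 - J33 * J22 * J11.
Definition mC3 := - J44 - J33 - J22 - J11.
Definition mC4 := J42 * J24 * J31 * J13 - J42 * J24 * J33 * J11
                 - J44 * J31 * J13 * J22 + J44 * J33 * J22 * J11.
Definition mC1 := Pc - Nc / mC3.
Definition mC2 := Nc - mC3 * mC4 / mC1.
End Coex.

From Stdlib Require Import Reals Lra Psatz.
From Coquelicot Require Import Coquelicot.
Open Scope R_scope.

(* The animal equations do not involve the vectors, so at every equilibrium the
   Jacobian is block triangular, its diagonal blocks being 2x2 Metzler matrices
   (animals, vectors).  A Hurwitz Metzler block admits a diagonal quadratic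
   Lyapunov function; weighting the animal block heavily absorbs the coupling
   term, and since the linearisation error is o(|x - E|) the resulting diagonal
   quadratic form is a strict Lyapunov function near E, so E is LAS as soon as
   both blocks are Hurwitz.  At E_0000 the animal block is Hurwitz because r_A
   lies below the smaller eigenvalue r_{A,min} of the migration-mortality matrix.
   At an equilibrium with positive components, each block without its
   self-limitation terms annihilates the positive vector of population sizes,
   which makes both blocks Hurwitz automatically.  Positive equilibria come from
   the intermediate value theorem after eliminating one coordinate. *)

Definition szero : state := St 0 0 0 0.
Definition sdiff (x y : state) : state :=
  St (sV1 x - sV1 y) (sA1 x - sA1 y) (sV2 x - sV2 y) (sA2 x - sA2 y).
Definition sadd (u v : state) : state :=
  St (sV1 u + sV1 v) (sA1 u + sA1 v) (sV2 u + sV2 v) (sA2 u + sA2 v).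
Definition sscale (c : R) (u : state) : state :=
  St (c * sV1 u) (c * sA1 u) (c * sV2 u) (c * sA2 u).
Definition sprod (u v : state) : state :=
  St (sV1 u * sV1 v) (sA1 u * sA1 v) (sV2 u * sV2 v) (sA2 u * sA2 v).
Definition sdot (u v : state) : R :=
  sV1 u * sV1 v + sA1 u * sA1 v + sV2 u * sV2 v + sA2 u * sA2 v.
Definition snorm1 (u : state) : R :=
  Rabs (sV1 u) + Rabs (sA1 u) + Rabs (sV2 u) + Rabs (sA2 u).

Lemma state_eq (u v : state) :
  sV1 u = sV1 v -> sA1 u = sA1 v -> sV2 u = sV2 v -> sA2 u = sA2 v -> u = v.
Proof. destruct u, v; cbn; intros -> -> -> ->; reflexivity. Qed.

Lemma Rabs_sV1_le_sdist x y : Rabs (sV1 x - sV1 y) <= sdist x y.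
Proof. eapply Rle_trans; [apply Rmax_l | apply Rmax_l]. Qed.
Lemma Rabs_sA1_le_sdist x y : Rabs (sA1 x - sA1 y) <= sdist x y.
Proof. eapply Rle_trans; [apply Rmax_r | apply Rmax_l]. Qed.
Lemma Rabs_sV2_le_sdist x y : Rabs (sV2 x - sV2 y) <= sdist x y.
Proof. eapply Rle_trans; [apply Rmax_l | apply Rmax_r]. Qed.
Lemma Rabs_sA2_le_sdist x y : Rabs (sA2 x - sA2 y) <= sdist x y.
Proof. eapply Rle_trans; [apply Rmax_r | apply Rmax_r]. Qed.

Lemma sdist_ge0 x y : 0 <= sdist x y.
Proof. eapply Rle_trans; [apply Rabs_pos | apply Rabs_sV1_le_sdist]. Qed.

Lemma sdist_sq_le_sdot x y : sdist x y ^ 2 <= sdot (sdiff x y) (sdiff x y).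
Proof.
  unfold sdist, sdot, sdiff; cbn [sV1 sA1 sV2 sA2].
  pose proof (pow2_abs (sV1 x - sV1 y)); pose proof (pow2_abs (sA1 x - sA1 y)).
  pose proof (pow2_abs (sV2 x - sV2 y)); pose proof (pow2_abs (sA2 x - sA2 y)).
  unfold Rmax; repeat destruct Rle_dec; nra.
Qed.

Lemma sdot_le_sdist_sq x y : sdot (sdiff x y) (sdiff x y) <= 4 * sdist x y ^ 2.
Proof.
  pose proof (Rabs_sV1_le_sdist x y); pose proof (Rabs_sA1_le_sdist x y).
  pose proof (Rabs_sV2_le_sdist x y); pose proof (Rabs_sA2_le_sdist x y).
  pose proof (pow2_abs (sV1 x - sV1 y)); pose proof (pow2_abs (sA1 x - sA1 y)).
  pose proof (pow2_abs (sV2 x - sV2 y)); pose proof (pow2_abs (sA2 x - sA2 y)).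
  pose proof (Rabs_pos (sV1 x - sV1 y)); pose proof (Rabs_pos (sA1 x - sA1 y)).
  pose proof (Rabs_pos (sV2 x - sV2 y)); pose proof (Rabs_pos (sA2 x - sA2 y)).
  unfold sdot, sdiff; cbn [sV1 sA1 sV2 sA2]; nra.
Qed.

Lemma Rabs_sdot_le u x y : Rabs (sdot u (sdiff x y)) <= snorm1 u * sdist x y.
Proof.
  pose proof (Rabs_sV1_le_sdist x y); pose proof (Rabs_sA1_le_sdist x y).
  pose proof (Rabs_sV2_le_sdist x y); pose proof (Rabs_sA2_le_sdist x y).
  unfold sdot, snorm1, sdiff; cbn [sV1 sA1 sV2 sA2].
  pose proof (Rabs_pos (sV1 u)); pose proof (Rabs_pos (sA1 u)).
  pose proof (Rabs_pos (sV2 u)); pose proof (Rabs_pos (sA2 u)).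
  eapply Rle_trans; [apply Rabs_triang|].
  eapply Rle_trans; [apply Rplus_le_compat_r; apply Rabs_triang|].
  eapply Rle_trans; [apply Rplus_le_compat_r, Rplus_le_compat_r; apply Rabs_triang|].
  rewrite !Rabs_mult; nra.
Qed.

Definition near (E : state) (P : state -> Prop) : Prop :=
  exists d, 0 < d /\ forall x, sdist x E < d -> P x.

Lemma near_ball E d : 0 < d -> near E (fun x => sdist x E < d).
Proof. intros Hd; exists d; auto. Qed.

Lemma near_and E (P Q : state -> Prop) :
  near E P -> near E Q -> near E (fun x => P x /\ Q x).
Proof.
  intros [d1 [H1 HP]] [d2 [H2 HQ]]; exists (Rmin d1 d2); split; [now apply Rmin_pos|].
  intros x Hx; split; [apply HP | apply HQ];
    eapply Rlt_le_trans; eauto; [apply Rmin_l | apply Rmin_r].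
Qed.

Lemma near_mono E (P Q : state -> Prop) :
  (forall x, P x -> Q x) -> near E P -> near E Q.
Proof. intros HPQ [d [Hd HP]]; exists d; auto. Qed.

Definition small_o (r : state -> R) (E : state) : Prop :=
  forall eps, 0 < eps -> near E (fun x => Rabs (r x) <= eps * sdist x E).
Definition big_O (r : state -> R) (E : state) : Prop :=
  exists C, near E (fun x => Rabs (r x) <= C * sdist x E).

Section Landau.
Variable E : state.

Lemma small_o_ext (r r' : state -> R) :
  (forall x, r x = r' x) -> small_o r E -> small_o r' E.
Proof.
  intros Hr Ho eps He; eapply near_mono; [|apply (Ho eps He)].
  intros x B; rewrite <- Hr; exact B.
Qed.

Lemma small_o_0 : small_o (fun _ => 0) E.
Proof.
  intros eps He; exists 1; split; [lra|]; intros x _.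
  rewrite Rabs_R0; pose proof (sdist_ge0 x E); nra.
Qed.

Lemma small_o_plus (r1 r2 : state -> R) :
  small_o r1 E -> small_o r2 E -> small_o (fun x => r1 x + r2 x) E.
Proof.
  intros H1 H2 eps He.
  eapply near_mono; [|apply near_and; [apply (H1 (eps / 2)) | apply (H2 (eps / 2))]; lra].
  intros x [B1 B2]; eapply Rle_trans; [apply Rabs_triang | lra].
Qed.

Lemma small_o_scale c (r : state -> R) : small_o r E -> small_o (fun x => c * r x) E.
Proof.
  intros H eps He.
  assert (Hc : 0 < Rabs c + 1) by (pose proof (Rabs_pos c); lra).
  eapply near_mono; [|apply (H (eps / (Rabs c + 1)))]; [|now apply Rdiv_lt_0_compat].
  intros x B; rewrite Rabs_mult.
  pose proof (Rabs_pos (r x)); pose proof (Rabs_pos c); pose proof (sdist_ge0 x E).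
  assert (Hq : eps / (Rabs c + 1) * (Rabs c + 1) = eps) by (field; lra).
  assert (Rabs c * Rabs (r x) <= (Rabs c + 1) * (eps / (Rabs c + 1) * sdist x E)) by nra.
  nra.
Qed.

Lemma big_O_ext (r r' : state -> R) :
  (forall x, r x = r' x) -> big_O r E -> big_O r' E.
Proof.
  intros Hr [C HC]; exists C; eapply near_mono; [|apply HC].
  intros x B; rewrite <- Hr; exact B.
Qed.

Lemma big_O_of_small_o (r : state -> R) : small_o r E -> big_O r E.
Proof. intros H; exists 1; apply H; lra. Qed.

Lemma big_O_plus (r1 r2 : state -> R) :
  big_O r1 E -> big_O r2 E -> big_O (fun x => r1 x + r2 x) E.
Proof.
  intros [C1 H1] [C2 H2]; exists (C1 + C2).
  eapply near_mono; [|apply (near_and _ _ _ H1 H2)].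
  intros x [B1 B2]; eapply Rle_trans; [apply Rabs_triang | lra].
Qed.

Lemma big_O_sdot l : big_O (fun x => sdot l (sdiff x E)) E.
Proof. exists (snorm1 l); exists 1; split; [lra|]; intros x _; apply Rabs_sdot_le. Qed.

Lemma small_o_mult (f g : state -> R) :
  big_O f E -> big_O g E -> small_o (fun x => f x * g x) E.
Proof.
  intros [Cf Hf] [Cg Hg] eps He.
  set (C := Rabs (Cf * Cg) + 1).
  assert (HC : 0 < C) by (pose proof (Rabs_pos (Cf * Cg)); unfold C; lra).
  pose proof (near_ball E (eps / C) (Rdiv_lt_0_compat _ _ He HC)) as Hb.
  eapply near_mono; [|apply (near_and _ _ _ (near_and _ _ _ Hf Hg) Hb)].
  intros x [[Bf Bg] Bs]; set (s := sdist x E) in *.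
  pose proof (sdist_ge0 x E) as Hs; fold s in Hs.
  pose proof (Rabs_pos (f x)); pose proof (Rabs_pos (g x)).
  pose proof (Rle_abs (Cf * Cg)).
  assert (HsC : s * C <= eps) by (apply Rlt_le, Rlt_div_r; auto).
  rewrite Rabs_mult.
  assert (Rabs (f x) * Rabs (g x) <= Cf * Cg * s * s) by nra.
  unfold C in HsC; nra.
Qed.

Lemma Rabs_residual_derivable h z h' : derivable_pt_lim h z h' ->
  forall eps, 0 < eps -> exists d, 0 < d /\ forall u, Rabs u < d ->
    Rabs (h (z + u) - h z - h' * u) <= eps * Rabs u.
Proof.
  intros H eps He; destruct (H eps He) as [d Hd].
  exists d; split; [apply cond_pos|]; intros u Hu.
  destruct (Req_dec u 0) as [->|Hn].
  { rewrite Rplus_0_r, Rmult_0_r, Rminus_0_r, Rminus_diag, Rabs_R0; lra. }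
  replace (h (z + u) - h z - h' * u) with (((h (z + u) - h z) / u - h') * u) by (field; auto).
  rewrite Rabs_mult; apply Rmult_le_compat_r; [apply Rabs_pos | left; auto].
Qed.

Lemma small_o_comp h h' (g : state -> R) :
  derivable_pt_lim h (g E) h' -> big_O (fun x => g x - g E) E ->
  small_o (fun x => h (g x) - h (g E) - h' * (g x - g E)) E.
Proof.
  intros Hh [C Hg] eps He.
  set (C' := Rabs C + 1).
  assert (HC : 0 < C') by (pose proof (Rabs_pos C); unfold C'; lra).
  destruct (Rabs_residual_derivable _ _ _ Hh (eps / C')) as [d [Hd Bh]];
    [now apply Rdiv_lt_0_compat|].
  pose proof (near_ball E (d / C') (Rdiv_lt_0_compat _ _ Hd HC)) as Hb.
  eapply near_mono; [|apply (near_and _ _ _ Hg Hb)].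
  intros x [Bg Bs]; set (s := sdist x E) in *.
  pose proof (sdist_ge0 x E) as Hs; fold s in Hs.
  pose proof (Rle_abs C).
  assert (Bg' : Rabs (g x - g E) <= C' * s) by (unfold C'; nra).
  assert (Hu : Rabs (g x - g E) < d).
  { apply (Rmult_lt_compat_l C') in Bs; [|lra].
    replace (C' * (d / C')) with d in Bs by (field; lra); lra. }
  specialize (Bh _ Hu); replace (g E + (g x - g E)) with (g x) in Bh by ring.
  eapply Rle_trans; [apply Bh|].
  apply (Rmult_le_compat_l (eps / C')) in Bg'; [|apply Rlt_le, Rdiv_lt_0_compat; lra].
  replace (eps / C' * (C' * s)) with (eps * s) in Bg' by (field; lra); exact Bg'.
Qed.

End Landau.

Definition has_grad (g : state -> R) (E l : state) : Prop :=
  small_o (fun x => g x - g E - sdot l (sdiff x E)) E.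

Section Gradient.
Variable E : state.

Lemma has_grad_eq (g : state -> R) l l' : has_grad g E l -> l = l' -> has_grad g E l'.
Proof. intros H <-; exact H. Qed.

Lemma big_O_of_has_grad (g : state -> R) l : has_grad g E l -> big_O (fun x => g x - g E) E.
Proof.
  intros H; eapply big_O_ext; [|apply (big_O_plus _ _ _ (big_O_of_small_o _ _ H) (big_O_sdot E l))].
  intros x; cbv beta; ring.
Qed.

Lemma has_grad_const c : has_grad (fun _ => c) E szero.
Proof. eapply small_o_ext; [|apply small_o_0]; intros x; unfold sdot; cbn; ring. Qed.

Lemma has_grad_sV1 : has_grad sV1 E (St 1 0 0 0).
Proof. eapply small_o_ext; [|apply small_o_0]; intros x; unfold sdot; cbn; ring. Qed.
Lemma has_grad_sA1 : has_grad sA1 E (St 0 1 0 0).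
Proof. eapply small_o_ext; [|apply small_o_0]; intros x; unfold sdot; cbn; ring. Qed.
Lemma has_grad_sV2 : has_grad sV2 E (St 0 0 1 0).
Proof. eapply small_o_ext; [|apply small_o_0]; intros x; unfold sdot; cbn; ring. Qed.
Lemma has_grad_sA2 : has_grad sA2 E (St 0 0 0 1).
Proof. eapply small_o_ext; [|apply small_o_0]; intros x; unfold sdot; cbn; ring. Qed.

Lemma has_grad_plus (f g : state -> R) l m :
  has_grad f E l -> has_grad g E m -> has_grad (fun x => f x + g x) E (sadd l m).
Proof.
  intros Hf Hg; eapply small_o_ext; [|apply (small_o_plus _ _ _ Hf Hg)].
  intros x; unfold sdot, sadd; cbn; ring.
Qed.

Lemma has_grad_scale c (f : state -> R) l :
  has_grad f E l -> has_grad (fun x => c * f x) E (sscale c l).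
Proof.
  intros Hf; eapply small_o_ext; [|apply (small_o_scale _ c _ Hf)].
  intros x; unfold sdot, sscale; cbn; ring.
Qed.

Lemma has_grad_minus (f g : state -> R) l m :
  has_grad f E l -> has_grad g E m ->
  has_grad (fun x => f x - g x) E (sadd l (sscale (-1) m)).
Proof.
  intros Hf Hg; eapply small_o_ext;
    [|apply (small_o_plus _ _ _ Hf (has_grad_scale (-1) _ _ Hg))].
  intros x; unfold sdot, sadd, sscale; cbn; ring.
Qed.

Lemma has_grad_mult (f g : state -> R) l m :
  has_grad f E l -> has_grad g E m ->
  has_grad (fun x => f x * g x) E (sadd (sscale (f E) m) (sscale (g E) l)).
Proof.
  intros Hf Hg.
  pose proof (small_o_mult _ _ _ (big_O_of_has_grad _ _ Hf) (big_O_of_has_grad _ _ Hg)) as Hfg.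
  pose proof (small_o_plus _ _ _ (small_o_scale _ (f E) _ Hg) (small_o_scale _ (g E) _ Hf))
    as Hlin.
  eapply small_o_ext; [|apply (small_o_plus _ _ _ Hlin Hfg)].
  intros x; unfold sdot, sadd, sscale; cbn; ring.
Qed.

Lemma has_grad_comp h h' (g : state -> R) l :
  derivable_pt_lim h (g E) h' -> has_grad g E l ->
  has_grad (fun x => h (g x)) E (sscale h' l).
Proof.
  intros Hh Hg.
  pose proof (small_o_comp _ _ _ _ Hh (big_O_of_has_grad _ _ Hg)) as Hc.
  eapply small_o_ext; [|apply (small_o_plus _ _ _ Hc (small_o_scale _ h' _ Hg))].
  intros x; unfold sdot, sscale; cbn; ring.
Qed.

Lemma has_grad_div (f g : state -> R) l m : g E <> 0 ->
  has_grad f E l -> has_grad g E m ->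
  has_grad (fun x => f x / g x) E
    (sadd (sscale (f E) (sscale (- / g E ^ 2) m)) (sscale (/ g E) l)).
Proof.
  intros Hg0 Hf Hg; apply (has_grad_mult f (fun x => / g x)); [exact Hf|].
  apply (has_grad_comp Rinv); [|exact Hg].
  apply is_derive_Reals; auto_derive; [auto | field; auto].
Qed.

End Gradient.

(* [f - g] and [f / g] unfold to [f + - g] and [f * / g], so the minus and
   division rules must be tried before the plus and product rules. *)
Ltac has_grad_rules :=
  repeat first
    [ apply has_grad_const | apply has_grad_sV1 | apply has_grad_sA1
    | apply has_grad_sV2 | apply has_grad_sA2 | apply has_grad_div
    | apply has_grad_minus | apply has_grad_plus | apply has_grad_mult ].

Lemma continuity_of_is_derive (h : R -> R) t l : is_derive h t l ->
  forall e, 0 < e -> exists d, 0 < d /\ forall u, Rabs (u - t) < d -> Rabs (h u - h t) < e.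
Proof.
  intros H e He.
  assert (Hc : continuity_pt h t)
    by (apply continuity_pt_filterlim, (ex_derive_continuous h t); exists l; exact H).
  destruct (Hc e He) as [d [Hd Hu]]; exists d; split; [exact Hd|]; intros u Hut.
  destruct (Req_dec u t) as [->|Hn]; [rewrite Rminus_diag, Rabs_R0; exact He|].
  apply (Hu u); split; [split; [exact I | auto] | exact Hut].
Qed.

Lemma nonincreasing_of_derive_nonpos (h dh : R -> R) a b : a <= b ->
  (forall t, a <= t <= b -> is_derive h t (dh t)) ->
  (forall t, a < t < b -> dh t <= 0) -> h b <= h a.
Proof.
  intros Hab Hd Hneg.
  destruct (Req_dec a b) as [->|Hne]; [lra|].
  destruct (MVT_cor2 h dh a b) as [c [Heq Hc]]; [lra | |].
  - intros t Ht; apply is_derive_Reals, Hd, Ht.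
  - assert (dh c <= 0) by (apply Hneg, Hc); nra.
Qed.

(* The first exit time from the sublevel set {w < B} cannot exist: before it
   w is nonincreasing, hence still below w 0 < B at that time. *)
Lemma sublevel_forward_invariant (w dw : R -> R) B :
  (forall t, 0 <= t -> is_derive w t (dw t)) ->
  (forall t, 0 <= t -> w t < B -> dw t <= 0) ->
  w 0 < B -> forall t, 0 <= t -> w t < B.
Proof.
  intros Hd Hdec H0 t1 Ht1; destruct (Rlt_dec (w t1) B) as [|Hexit]; [assumption|exfalso].
  set (S u := 0 <= u /\ forall v, 0 <= v <= u -> w v < B).
  assert (S0 : S 0) by (split; [lra | intros v Hv; replace v with 0 by lra; exact H0]).
  assert (Sb : bound S).
  { exists t1; intros u [Hu Hv]; destruct (Rle_dec u t1) as [|Hut]; [assumption|].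
    exfalso; apply Hexit, Hv; lra. }
  destruct (completeness S Sb (ex_intro _ 0 S0)) as [tau [Hub Hlub]].
  assert (Htau : 0 <= tau) by (apply Hub, S0).
  assert (before : forall v, 0 <= v < tau -> w v < B).
  { intros v Hv; destruct (Rlt_dec (w v) B) as [|Hnv]; [assumption|exfalso].
    enough (tau <= v) by lra.
    apply Hlub; intros u [Hu Hu2]; destruct (Rle_dec u v) as [|Huv]; [assumption|].
    exfalso; apply Hnv, Hu2; lra. }
  assert (at_tau : w tau < B).
  { enough (w tau <= w 0) by lra.
    apply (nonincreasing_of_derive_nonpos w dw 0 tau Htau).
    - intros t Ht; apply Hd; lra.
    - intros t Ht; apply Hdec; [lra | apply before; lra]. }
  destruct (continuity_of_is_derive w tau (dw tau) (Hd tau Htau) (B - w tau))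
    as [d [Hdp Hdd]]; [lra|].
  assert (S (tau + d / 2)) as Hs.
  { split; [lra|]; intros v Hv; destruct (Rlt_dec v tau) as [|Hge]; [apply before; lra|].
    assert (Hvd : Rabs (v - tau) < d) by (rewrite Rabs_right; lra).
    specialize (Hdd v Hvd); apply Rabs_def2 in Hdd; lra. }
  specialize (Hub _ Hs); lra.
Qed.

Lemma exp_decay (w dw : R -> R) c :
  (forall t, 0 <= t -> is_derive w t (dw t)) ->
  (forall t, 0 <= t -> dw t <= - c * w t) ->
  forall t, 0 <= t -> w t * exp (c * t) <= w 0.
Proof.
  intros Hd Hdec t Ht.
  replace (w 0) with (w 0 * exp (c * 0)) by (rewrite Rmult_0_r, exp_0; ring).
  apply (nonincreasing_of_derive_nonpos (fun u => w u * exp (c * u))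
           (fun u => dw u * exp (c * u) + w u * (c * exp (c * u))) 0 t Ht).
  - intros u Hu; apply (is_derive_mult w (fun u => exp (c * u))); [apply Hd; lra| |].
    + auto_derive; [exact I | ring].
    + intros; apply Rmult_comm.
  - intros u Hu; pose proof (Hdec u ltac:(lra)); pose proof (exp_pos (c * u)); nra.
Qed.

Lemma is_lim_0_of_exp_bound (s : R -> R) m c w0 : 0 < m -> 0 < c ->
  (forall t, 0 <= s t) -> (forall t, 0 <= t -> m * s t ^ 2 * exp (c * t) <= w0) ->
  is_lim s p_infty 0.
Proof.
  intros Hm Hc Hs Hb; apply is_lim_spec; intros eps; cbn.
  pose proof (cond_pos eps) as He.
  assert (Hk : 0 < m * eps ^ 2 * c).
  { apply Rmult_lt_0_compat; [apply Rmult_lt_0_compat; [exact Hm | apply pow_lt, He] | exact Hc]. }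
  exists (Rmax 0 (w0 / (m * eps ^ 2 * c))); intros t Ht.
  assert (Ht0 : 0 < t) by (eapply Rle_lt_trans; [apply Rmax_l | exact Ht]).
  assert (Ht1 : w0 < t * (m * eps ^ 2 * c)).
  { apply Rlt_div_l; [exact Hk|]. eapply Rle_lt_trans; [apply Rmax_r | exact Ht]. }
  pose proof (exp_ineq1_le (c * t)); pose proof (exp_pos (c * t)).
  specialize (Hb t (Rlt_le _ _ Ht0)); pose proof (Hs t).
  rewrite Rminus_0_r, Rabs_right by lra.
  destruct (Rlt_dec (s t) eps) as [|Hge]; [assumption|exfalso].
  assert (eps ^ 2 <= s t ^ 2) by nra.
  assert (m * eps ^ 2 * (1 + c * t) <= m * s t ^ 2 * exp (c * t)).
  { apply Rmult_le_compat; [apply Rmult_le_pos; [lra | apply pow2_ge_0] | nra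
                           | apply Rmult_le_compat_l; lra | assumption]. }
  nra.
Qed.

Definition trajectory (F : state -> state) (x : R -> state) : Prop :=
  forall t, 0 <= t ->
    is_derive (fun s => sV1 (x s)) t (sV1 (F (x t))) /\
    is_derive (fun s => sA1 (x s)) t (sA1 (F (x t))) /\
    is_derive (fun s => sV2 (x s)) t (sV2 (F (x t))) /\
    is_derive (fun s => sA2 (x s)) t (sA2 (F (x t))).

Definition stable (F : state -> state) (E : state) : Prop :=
  forall eps, 0 < eps -> exists delta, 0 < delta /\
    forall x, trajectory F x -> sdist (x 0) E < delta ->
      forall t, 0 <= t -> sdist (x t) E < eps.

Definition attractive (F : state -> state) (E : state) : Prop :=
  exists delta, 0 < delta /\
    forall x, trajectory F x -> sdist (x 0) E < delta ->
      is_lim (fun t => sdist (x t) E) p_infty 0.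

Section LyapunovFunction.
Variables (F : state -> state) (E : state) (W dW : state -> R) (m M r c : R).
Hypotheses (m_pos : 0 < m) (M_pos : 0 < M) (r_pos : 0 < r) (c_pos : 0 < c).
Hypothesis W_lower : forall x, m * sdist x E ^ 2 <= W x.
Hypothesis W_upper : forall x, W x <= M * sdist x E ^ 2.
Hypothesis W_derive : forall x t, trajectory F x -> 0 <= t ->
  is_derive (fun s => W (x s)) t (dW (x t)).
Hypothesis W_decay : forall x, sdist x E < r -> dW x <= - c * W x.

Lemma sdist_lt_of_W_lt x rho : 0 < rho -> W x < m * rho ^ 2 -> sdist x E < rho.
Proof.
  intros Hrho HW; pose proof (W_lower x); pose proof (sdist_ge0 x E).
  destruct (Rlt_dec (sdist x E) rho) as [|Hn]; [assumption|exfalso].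
  assert (rho ^ 2 <= sdist x E ^ 2) by nra; nra.
Qed.

Let theta := m / (m + M).

Lemma theta_pos : 0 < theta.
Proof. apply Rdiv_lt_0_compat; lra. Qed.

Lemma W_lt_of_sdist_lt x rho : 0 < rho -> sdist x E < rho * theta -> W x < m * rho ^ 2.
Proof.
  intros Hrho Hx; pose proof theta_pos.
  assert (HMth : M * theta < m).
  { unfold theta; apply (Rmult_lt_reg_r (m + M)); [lra|].
    replace (M * (m / (m + M)) * (m + M)) with (M * m) by (field; lra); nra. }
  assert (Hth1 : theta < 1) by (unfold theta; apply Rlt_div_l; lra).
  pose proof (W_upper x); pose proof (sdist_ge0 x E).
  assert (sdist x E ^ 2 < (rho * theta) ^ 2) by nra.
  assert (M * (rho * theta) ^ 2 <= M * theta * rho ^ 2).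
  { replace (M * (rho * theta) ^ 2) with (M * rho ^ 2 * (theta * theta)) by ring.
    replace (M * theta * rho ^ 2) with (M * rho ^ 2 * theta) by ring.
    apply Rmult_le_compat_l; nra. }
  nra.
Qed.

Lemma trajectory_stays_close x rho : 0 < rho -> rho <= r -> trajectory F x ->
  W (x 0) < m * rho ^ 2 -> forall t, 0 <= t -> sdist (x t) E < rho.
Proof.
  intros Hrho Hr Hx H0 t Ht; apply sdist_lt_of_W_lt; [exact Hrho|].
  apply (sublevel_forward_invariant (fun s => W (x s)) (fun s => dW (x s))); auto.
  intros u Hu HWu.
  assert (Hu_r : sdist (x u) E < r)
    by (eapply Rlt_le_trans; [apply sdist_lt_of_W_lt; eauto | exact Hr]).
  assert (0 <= W (x u)).
  { eapply Rle_trans; [|apply W_lower]; apply Rmult_le_pos; [lra | apply pow2_ge_0]. }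
  pose proof (W_decay (x u) Hu_r); nra.
Qed.

Theorem lyapunov_stable : stable F E.
Proof.
  intros eps Heps; set (rho := Rmin r eps).
  assert (Hrho : 0 < rho) by (apply Rmin_pos; lra).
  exists (rho * theta); split; [apply Rmult_lt_0_compat; [lra | apply theta_pos]|].
  intros x Hx H0 t Ht; eapply Rlt_le_trans; [|apply Rmin_r].
  apply (trajectory_stays_close x rho); auto; [apply Rmin_l | now apply W_lt_of_sdist_lt].
Qed.

Theorem lyapunov_attractive : attractive F E.
Proof.
  exists (r * theta); split; [apply Rmult_lt_0_compat; [lra | apply theta_pos]|].
  intros x Hx H0.
  assert (inside : forall t, 0 <= t -> sdist (x t) E < r)
    by (apply trajectory_stays_close; auto; [lra | now apply W_lt_of_sdist_lt]).
  apply (is_lim_0_of_exp_bound _ m c (W (x 0))); auto; [intros; apply sdist_ge0|].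
  intros t Ht; eapply Rle_trans;
    [|apply (exp_decay (fun s => W (x s)) (fun s => dW (x s)) c); [| |exact Ht]].
  - apply Rmult_le_compat_r; [apply Rlt_le, exp_pos | apply W_lower].
  - intros u Hu; apply W_derive; assumption.
  - intros u Hu; apply W_decay, inside, Hu.
Qed.

End LyapunovFunction.

Lemma weighted_error_le q y rho s eps : 0 < q -> Rabs y <= s -> Rabs rho <= eps * s ->
  q * y * rho <= q * (eps * s ^ 2).
Proof.
  intros Hq Hy Hr.
  assert (Habs : y * rho <= Rabs y * Rabs rho) by (rewrite <- Rabs_mult; apply Rle_abs).
  assert (Rabs y * Rabs rho <= s * (eps * s)) by (apply Rmult_le_compat; auto; apply Rabs_pos).
  nra.
Qed.

Lemma is_derive_weighted_sq (u : R -> R) t u' a e : is_derive u t u' ->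
  is_derive (fun s => a * (u s - e) * (u s - e)) t (2 * a * (u t - e) * u').
Proof.
  intros Hu.
  assert (Hf : is_derive (fun z => a * (z - e) * (z - e)) (u t) (2 * a * (u t - e)))
    by (auto_derive; [exact I | ring]).
  pose proof (is_derive_comp _ _ t _ _ Hf Hu) as H.
  replace (2 * a * (u t - e) * u') with (scal u' (2 * a * (u t - e))); [exact H|].
  unfold scal; cbn; unfold mult; cbn; ring.
Qed.

Section QuadraticLyapunov.
Variables (F : state -> state) (E q l1 l2 l3 l4 : state) (k : R).
Hypothesis F_E : F E = szero.
Hypotheses (grad1 : has_grad (fun x => sV1 (F x)) E l1)
           (grad2 : has_grad (fun x => sA1 (F x)) E l2)
           (grad3 : has_grad (fun x => sV2 (F x)) E l3)
           (grad4 : has_grad (fun x => sA2 (F x)) E l4).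
Hypotheses (q1 : 0 < sV1 q) (q2 : 0 < sA1 q) (q3 : 0 < sV2 q) (q4 : 0 < sA2 q).
Hypothesis k_pos : 0 < k.
Hypothesis linear_decay : forall v,
  sdot (sprod q v) (St (sdot l1 v) (sdot l2 v) (sdot l3 v) (sdot l4 v)) <= - k * sdot v v.

Let W x := sdot (sprod q (sdiff x E)) (sdiff x E).
Let dW x := 2 * sdot (sprod q (sdiff x E)) (F x).
Let qmin := Rmin (Rmin (sV1 q) (sA1 q)) (Rmin (sV2 q) (sA2 q)).
Let qsum := sV1 q + sA1 q + sV2 q + sA2 q.

Lemma W_lower_bound x : qmin * sdist x E ^ 2 <= W x.
Proof.
  assert (m1 : qmin <= sV1 q) by (eapply Rle_trans; apply Rmin_l).
  assert (m2 : qmin <= sA1 q) by (eapply Rle_trans; [apply Rmin_l | apply Rmin_r]).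
  assert (m3 : qmin <= sV2 q) by (eapply Rle_trans; [apply Rmin_r | apply Rmin_l]).
  assert (m4 : qmin <= sA2 q) by (eapply Rle_trans; [apply Rmin_r | apply Rmin_r]).
  assert (Hq : 0 < qmin) by (repeat apply Rmin_pos; assumption).
  pose proof (sdist_sq_le_sdot x E).
  assert (qmin * sdot (sdiff x E) (sdiff x E) <= W x).
  { unfold W, sdot, sprod, sdiff; cbn [sV1 sA1 sV2 sA2].
    pose proof (Rle_0_sqr (sV1 x - sV1 E)); pose proof (Rle_0_sqr (sA1 x - sA1 E)).
    pose proof (Rle_0_sqr (sV2 x - sV2 E)); pose proof (Rle_0_sqr (sA2 x - sA2 E)).
    unfold Rsqr in *; nra. }
  nra.
Qed.

Lemma W_le_sdot x : W x <= qsum * sdot (sdiff x E) (sdiff x E).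
Proof.
  unfold W, qsum, sdot, sprod, sdiff; cbn [sV1 sA1 sV2 sA2].
  pose proof (Rle_0_sqr (sV1 x - sV1 E)); pose proof (Rle_0_sqr (sA1 x - sA1 E)).
  pose proof (Rle_0_sqr (sV2 x - sV2 E)); pose proof (Rle_0_sqr (sA2 x - sA2 E)).
  unfold Rsqr in *; nra.
Qed.

Lemma W_upper_bound x : W x <= 4 * qsum * sdist x E ^ 2.
Proof.
  pose proof (W_le_sdot x); pose proof (sdot_le_sdist_sq x E).
  assert (0 < qsum) by (unfold qsum; lra); nra.
Qed.

Lemma W_derive_along x t : trajectory F x -> 0 <= t ->
  is_derive (fun s => W (x s)) t (dW (x t)).
Proof.
  intros Hx Ht; destruct (Hx t Ht) as (D1 & D2 & D3 & D4).
  unfold W, dW, sdot, sprod, sdiff; cbn [sV1 sA1 sV2 sA2].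
  replace (2 * _) with
    (2 * sV1 q * (sV1 (x t) - sV1 E) * sV1 (F (x t))
     + 2 * sA1 q * (sA1 (x t) - sA1 E) * sA1 (F (x t))
     + 2 * sV2 q * (sV2 (x t) - sV2 E) * sV2 (F (x t))
     + 2 * sA2 q * (sA2 (x t) - sA2 E) * sA2 (F (x t))) by ring.
  repeat apply @is_derive_plus; apply is_derive_weighted_sq; assumption.
Qed.

Lemma dW_decay_near : exists r c, 0 < r /\ 0 < c /\
  forall x, sdist x E < r -> dW x <= - c * W x.
Proof.
  assert (Hqsum : 0 < qsum) by (unfold qsum; lra).
  set (eps := k / (2 * qsum)).
  assert (Heps : 0 < eps) by (apply Rdiv_lt_0_compat; lra).
  destruct (near_and _ _ _ (near_and _ _ _ (grad1 eps Heps) (grad2 eps Heps))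
                           (near_and _ _ _ (grad3 eps Heps) (grad4 eps Heps)))
    as [r [Hr Hnear]].
  exists r, (k / qsum); split; [exact Hr|]; split; [apply Rdiv_lt_0_compat; lra|].
  intros x Hx; destruct (Hnear x Hx) as [[R1 R2] [R3 R4]]; cbv beta in R1, R2, R3, R4.
  rewrite F_E in R1, R2, R3, R4; cbn [sV1 sA1 sV2 sA2 szero] in R1, R2, R3, R4.
  pose proof (weighted_error_le _ _ _ _ _ q1 (Rabs_sV1_le_sdist x E) R1).
  pose proof (weighted_error_le _ _ _ _ _ q2 (Rabs_sA1_le_sdist x E) R2).
  pose proof (weighted_error_le _ _ _ _ _ q3 (Rabs_sV2_le_sdist x E) R3).
  pose proof (weighted_error_le _ _ _ _ _ q4 (Rabs_sA2_le_sdist x E) R4).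
  pose proof (linear_decay (sdiff x E)); pose proof (sdist_sq_le_sdot x E).
  set (v := sdiff x E) in *; set (s := sdist x E) in *.
  assert (Hsplit : dW x = 2 * (sdot (sprod q v) (St (sdot l1 v) (sdot l2 v) (sdot l3 v) (sdot l4 v))
    + sV1 q * (sV1 x - sV1 E) * (sV1 (F x) - 0 - sdot l1 v)
    + sA1 q * (sA1 x - sA1 E) * (sA1 (F x) - 0 - sdot l2 v)
    + sV2 q * (sV2 x - sV2 E) * (sV2 (F x) - 0 - sdot l3 v)
    + sA2 q * (sA2 x - sA2 E) * (sA2 (F x) - 0 - sdot l4 v)))
    by (unfold dW, v, sdot, sprod, sdiff; cbn; ring).
  assert (Hsum : sV1 q * (eps * s ^ 2) + sA1 q * (eps * s ^ 2) + sV2 q * (eps * s ^ 2)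
                 + sA2 q * (eps * s ^ 2) = k / 2 * s ^ 2) by (unfold eps, qsum in *; field; lra).
  assert (HW : k / qsum * W x <= k * sdot v v).
  { apply (Rmult_le_reg_l (qsum / k)); [apply Rdiv_lt_0_compat; lra|].
    replace (qsum / k * (k / qsum * W x)) with (W x) by (field; lra).
    replace (qsum / k * (k * sdot v v)) with (qsum * sdot v v) by (field; lra).
    apply W_le_sdot. }
  assert (k / 2 * s ^ 2 <= k / 2 * sdot v v) by (apply Rmult_le_compat_l; lra).
  lra.
Qed.

Theorem quadratic_lyapunov : stable F E /\ attractive F E.
Proof.
  destruct dW_decay_near as [r [c [Hr [Hc Hdecay]]]].
  assert (Hqmin : 0 < qmin) by (repeat apply Rmin_pos; assumption).
  assert (Hqsum : 0 < 4 * qsum) by (unfold qsum; lra).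
  split; [apply (lyapunov_stable F E W dW qmin (4 * qsum) r c)
         | apply (lyapunov_attractive F E W dW qmin (4 * qsum) r c)];
    auto using W_lower_bound, W_upper_bound, W_derive_along.
Qed.

End QuadraticLyapunov.

Lemma quadratic_form_nonpos a b d x y : a <= 0 -> d <= 0 -> b ^ 2 <= a * d ->
  a * x ^ 2 + 2 * b * x * y + d * y ^ 2 <= 0.
Proof.
  intros Ha Hd Hb; destruct (Req_dec a 0) as [->|Hn].
  - assert (b = 0) by nra; subst; nra.
  - assert (a * (a * x ^ 2 + 2 * b * x * y + d * y ^ 2)
            = (a * x + b * y) ^ 2 + (a * d - b ^ 2) * y ^ 2) by ring.
    assert (0 <= (a * d - b ^ 2) * y ^ 2) by (apply Rmult_le_pos; [lra | apply pow2_ge_0]).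
    pose proof (pow2_ge_0 (a * x + b * y)); nra.
Qed.

Lemma quadratic_form_neg_def a b d : a < 0 -> 0 < a * d - b ^ 2 ->
  exists k, 0 < k /\ forall x y, a * x ^ 2 + 2 * b * x * y + d * y ^ 2 <= - k * (x ^ 2 + y ^ 2).
Proof.
  intros Ha Hdet; assert (Hd : d < 0) by nra.
  (* k (-(a + d)) = det makes (a + k, d + k) still satisfy the semidefinite test *)
  set (k := (a * d - b ^ 2) / - (a + d)).
  assert (Hk : k * - (a + d) = a * d - b ^ 2) by (unfold k; field; lra).
  assert (0 < k) by (unfold k; apply Rdiv_lt_0_compat; lra).
  exists k; split; [assumption|]; intros x y.
  pose proof (quadratic_form_nonpos (a + k) b (d + k) x y ltac:(nra) ltac:(nra) ltac:(nra)).
  nra.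
Qed.

(* The weights (m21, m12) make both off-diagonal entries equal to m12 m21. *)
Lemma metzler_diagonal_lyapunov m11 m12 m21 m22 :
  0 < m12 -> 0 < m21 -> m11 < 0 -> 0 < m11 * m22 - m12 * m21 ->
  exists k, 0 < k /\ forall x y,
    m21 * x * (m11 * x + m12 * y) + m12 * y * (m21 * x + m22 * y) <= - k * (x ^ 2 + y ^ 2).
Proof.
  intros H12 H21 H11 Hdet.
  destruct (quadratic_form_neg_def (m21 * m11) (m12 * m21) (m12 * m22)) as [k [Hk Hq]].
  - nra.
  - replace (m21 * m11 * (m12 * m22) - (m12 * m21) ^ 2)
      with (m12 * m21 * (m11 * m22 - m12 * m21)) by ring.
    apply Rmult_lt_0_compat; nra.
  - exists k; split; [assumption|]; intros x y.
    eapply Rle_trans; [|apply Hq]; right; ring.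
Qed.

Lemma young_product c u v kv : 0 < kv -> c * u * v <= kv / 4 * u ^ 2 + c ^ 2 / kv * v ^ 2.
Proof.
  intros Hk.
  assert (kv * (kv / 4 * u ^ 2 + c ^ 2 / kv * v ^ 2 - c * u * v) = (kv * u / 2 - c * v) ^ 2)
    by (field; lra).
  pose proof (pow2_ge_0 (kv * u / 2 - c * v)); nra.
Qed.

(* By Young's inequality the coupling costs half the decay of the first block
   plus a multiple C of |(y2, y4)|^2, which the weight lam = (C + 1) / ka pays. *)
Lemma triangular_coupling_absorbed kv ka c12 c14 c32 c34 : 0 < kv -> 0 < ka ->
  exists lam k, 0 < lam /\ 0 < k /\ forall QV QA y1 y2 y3 y4,
    QV <= - kv * (y1 ^ 2 + y3 ^ 2) -> QA <= - ka * (y2 ^ 2 + y4 ^ 2) ->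
    QV + lam * QA + y1 * (c12 * y2 + c14 * y4) + y3 * (c32 * y2 + c34 * y4)
    <= - k * (y1 ^ 2 + y2 ^ 2 + y3 ^ 2 + y4 ^ 2).
Proof.
  intros Hkv Hka.
  set (C := (c12 ^ 2 + c14 ^ 2 + c32 ^ 2 + c34 ^ 2) / kv).
  assert (HC : 0 <= C) by (apply Rdiv_le_0_compat; [nra | lra]).
  exists ((C + 1) / ka), (Rmin (kv / 2) 1).
  split; [apply Rdiv_lt_0_compat; lra|]; split; [apply Rmin_pos; lra|].
  intros QV QA y1 y2 y3 y4 HV HA.
  pose proof (young_product c12 y1 y2 kv Hkv); pose proof (young_product c14 y1 y4 kv Hkv).
  pose proof (young_product c32 y3 y2 kv Hkv); pose proof (young_product c34 y3 y4 kv Hkv).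
  assert (Hcross : c12 ^ 2 / kv * y2 ^ 2 + c14 ^ 2 / kv * y4 ^ 2 + c32 ^ 2 / kv * y2 ^ 2
                   + c34 ^ 2 / kv * y4 ^ 2 <= C * (y2 ^ 2 + y4 ^ 2)).
  { unfold C; unfold Rdiv.
    pose proof (pow2_ge_0 c12); pose proof (pow2_ge_0 c14); pose proof (pow2_ge_0 c32);
      pose proof (pow2_ge_0 c34); pose proof (pow2_ge_0 y2); pose proof (pow2_ge_0 y4).
    assert (0 < / kv) by (apply Rinv_0_lt_compat; lra).
    assert (0 <= / kv * (c12 ^ 2 + c32 ^ 2) * y4 ^ 2)
      by (apply Rmult_le_pos; [apply Rmult_le_pos|]; lra).
    assert (0 <= / kv * (c14 ^ 2 + c34 ^ 2) * y2 ^ 2)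
      by (apply Rmult_le_pos; [apply Rmult_le_pos|]; lra).
    nra. }
  assert (HlamA : (C + 1) / ka * QA <= - (C + 1) * (y2 ^ 2 + y4 ^ 2)).
  { replace (- (C + 1) * (y2 ^ 2 + y4 ^ 2)) with ((C + 1) / ka * (- ka * (y2 ^ 2 + y4 ^ 2)))
      by (field; lra).
    apply Rmult_le_compat_l; [apply Rlt_le, Rdiv_lt_0_compat|]; lra. }
  pose proof (Rmin_l (kv / 2) 1); pose proof (Rmin_r (kv / 2) 1).
  pose proof (pow2_ge_0 y1); pose proof (pow2_ge_0 y2);
    pose proof (pow2_ge_0 y3); pose proof (pow2_ge_0 y4).
  assert (Rmin (kv / 2) 1 * (y1 ^ 2 + y3 ^ 2) <= kv / 2 * (y1 ^ 2 + y3 ^ 2))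
    by (apply Rmult_le_compat_r; lra).
  assert (Rmin (kv / 2) 1 * (y2 ^ 2 + y4 ^ 2) <= 1 * (y2 ^ 2 + y4 ^ 2))
    by (apply Rmult_le_compat_r; lra).
  nra.
Qed.

Definition vector_field (p : params) (x : state) : state :=
  St (fV1 p x) (fA1 p x) (fV2 p x) (fA2 p x).

Lemma LAS_of_stable_attractive p E : equilibrium p E ->
  stable (vector_field p) E -> attractive (vector_field p) E -> LAS p E.
Proof.
  intros Heq Hs [d [Hd Ha]]; split; [exact Heq|]; split.
  - intros eps He; destruct (Hs eps He) as [delta [Hdelta H]].
    exists delta; split; [exact Hdelta|]; intros x Hx _; exact (H x Hx).
  - exists d; split; [exact Hd|]; intros x Hx _; exact (Ha x Hx).
Qed.

Lemma Rpower_ratio_pos a c n : 0 < Rpower a n / (Rpower a n + Rpower c n).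
Proof.
  pose proof (exp_pos (n * ln a)); pose proof (exp_pos (n * ln c)).
  unfold Rpower; apply Rdiv_lt_0_compat; lra.
Qed.

Lemma admissible_rates_pos p : admissible p ->
  0 < dVp12 p /\ 0 < dVp21 p /\ 0 < dAp12 p /\ 0 < dAp21 p /\ 0 < KAp1 p /\ 0 < KAp2 p.
Proof.
  intros (_&_&_&_&_&_&_&_&_&_&HK1&HK2&_&_&_&_&_&H1&H2&H3&H4&Hal1&Hal2).
  unfold dVp12, dVp21, dAp12, dAp21, KAp1, KAp2.
  repeat split; apply Rmult_lt_0_compat; try apply Rpower_ratio_pos; lra.
Qed.

Definition jac_V1 p (E : state) : state :=
  let V1 := sV1 E in let A1 := sA1 E in let V2 := sV2 E in let A2 := sA2 E in
  St (rV p * (A1 / (A1 + a1 p)) * (1 - 2 * V1 / KV1 p) - dVp12 p / (1 + b1 p * A1) - muV1 p)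
     (rV p * a1 p / (A1 + a1 p) ^ 2 * V1 * (1 - V1 / KV1 p)
      + dVp12 p * b1 p * V1 / (1 + b1 p * A1) ^ 2)
     (dVp21 p / (1 + b2 p * A2))
     (- dVp21 p * b2 p * V2 / (1 + b2 p * A2) ^ 2).
Definition jac_V2 p (E : state) : state :=
  let V1 := sV1 E in let A1 := sA1 E in let V2 := sV2 E in let A2 := sA2 E in
  St (dVp12 p / (1 + b1 p * A1))
     (- dVp12 p * b1 p * V1 / (1 + b1 p * A1) ^ 2)
     (rV p * (A2 / (A2 + a2 p)) * (1 - 2 * V2 / KV2 p) - dVp21 p / (1 + b2 p * A2) - muV2 p)
     (rV p * a2 p / (A2 + a2 p) ^ 2 * V2 * (1 - V2 / KV2 p)
      + dVp21 p * b2 p * V2 / (1 + b2 p * A2) ^ 2).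
Definition jac_A1 p (E : state) : state :=
  St 0 (rA p * (1 - 2 * sA1 E / KAp1 p) - dAp12 p - muA1 p) 0 (dAp21 p).
Definition jac_A2 p (E : state) : state :=
  St 0 (dAp12 p) 0 (rA p * (1 - 2 * sA2 E / KAp2 p) - dAp21 p - muA2 p).

Section Linearization.
Variables (p : params) (E : state).
Hypotheses (Hp : admissible p) (HA1 : 0 <= sA1 E) (HA2 : 0 <= sA2 E).

Lemma denominators_pos : 0 < sA1 E + a1 p /\ 0 < sA2 E + a2 p /\
  0 < 1 + b1 p * sA1 E /\ 0 < 1 + b2 p * sA2 E /\ 0 < KV1 p /\ 0 < KV2 p /\
  0 < KAp1 p /\ 0 < KAp2 p.
Proof.
  pose proof (admissible_rates_pos p Hp) as (_&_&_&_&?&?).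
  destruct Hp as (_&_&?&?&?&?&_&_&?&?&_); repeat split; nra.
Qed.

(* The computed gradient is compared coordinatewise: unfolding the nested
   [sadd]/[sscale] records at once produces an exponentially large term. *)
Ltac grad_of f jac :=
  pose proof denominators_pos as (?&?&?&?&?&?&?&?);
  eapply has_grad_eq; [unfold f; has_grad_rules; lra|];
  apply state_eq; cbn [sV1 sA1 sV2 sA2 sadd sscale szero jac]; field; repeat split; lra.

Lemma has_grad_fV1 : has_grad (fV1 p) E (jac_V1 p E).
Proof. grad_of fV1 jac_V1. Qed.
Lemma has_grad_fV2 : has_grad (fV2 p) E (jac_V2 p E).
Proof. grad_of fV2 jac_V2. Qed.
Lemma has_grad_fA1 : has_grad (fA1 p) E (jac_A1 p E).
Proof. grad_of fA1 jac_A1. Qed.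
Lemma has_grad_fA2 : has_grad (fA2 p) E (jac_A2 p E).
Proof. grad_of fA2 jac_A2. Qed.

End Linearization.

Section BlockStability.
Variables (p : params) (E : state).
Hypotheses (Hp : admissible p) (Heq : equilibrium p E)
           (HA1 : 0 <= sA1 E) (HA2 : 0 <= sA2 E).

Let J11 := sV1 (jac_V1 p E).
Let J13 := sV2 (jac_V1 p E).
Let J31 := sV1 (jac_V2 p E).
Let J33 := sV2 (jac_V2 p E).
Let a11 := sA1 (jac_A1 p E).
Let a22 := sA2 (jac_A2 p E).

Theorem LAS_of_Hurwitz_blocks :
  J11 < 0 -> 0 < J11 * J33 - J13 * J31 ->
  a11 < 0 -> 0 < a11 * a22 - dAp21 p * dAp12 p -> LAS p E.
Proof.
  intros HV1 HV2 HA3 HA4.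
  pose proof (admissible_rates_pos p Hp) as (P1 & P2 & P3 & P4 & _).
  pose proof (denominators_pos p E Hp HA1 HA2) as (_ & _ & D1 & D2 & _).
  assert (H13 : 0 < J13) by (apply Rdiv_lt_0_compat; lra).
  assert (H31 : 0 < J31) by (apply Rdiv_lt_0_compat; lra).
  destruct (metzler_diagonal_lyapunov J11 J13 J31 J33) as [kv [Hkv QV]]; try lra.
  destruct (metzler_diagonal_lyapunov a11 (dAp21 p) (dAp12 p) a22) as [ka [Hka QA]]; try lra.
  destruct (triangular_coupling_absorbed kv ka
              (J31 * sA1 (jac_V1 p E)) (J31 * sA2 (jac_V1 p E))
              (J13 * sA1 (jac_V2 p E)) (J13 * sA2 (jac_V2 p E)) Hkv Hka)
    as [lam [k [Hlam [Hk Habsorb]]]].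
  enough (stable (vector_field p) E /\ attractive (vector_field p) E) as [Hs Ha]
    by exact (LAS_of_stable_attractive p E Heq Hs Ha).
  apply (quadratic_lyapunov (vector_field p) E (St J31 (lam * dAp12 p) J13 (lam * dAp21 p))
             (jac_V1 p E) (jac_A1 p E) (jac_V2 p E) (jac_A2 p E) k).
  all: cbn [sV1 sA1 sV2 sA2]; try nra.
  - destruct Heq as (E1 & E2 & E3 & E4); unfold vector_field, szero.
    rewrite E1, E2, E3, E4; reflexivity.
  - exact (has_grad_fV1 p E Hp HA1 HA2).
  - exact (has_grad_fA1 p E Hp HA1 HA2).
  - exact (has_grad_fV2 p E Hp HA1 HA2).
  - exact (has_grad_fA2 p E Hp HA1 HA2).
  - intros [y1 y2 y3 y4].
    pose proof (Habsorb _ _ y1 y2 y3 y4 (QV y1 y3) (QA y2 y4)).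
    unfold sdot, sprod; cbn [sV1 sA1 sV2 sA2].
    change (sV1 (jac_A1 p E)) with 0; change (sV2 (jac_A1 p E)) with 0;
      change (sA2 (jac_A1 p E)) with (dAp21 p); change (sV1 (jac_A2 p E)) with 0;
      change (sV2 (jac_A2 p E)) with 0; change (sA1 (jac_A2 p E)) with (dAp12 p).
    fold J11 J13 J31 J33 a11 a22; lra.
Qed.

End BlockStability.

Lemma equilibrium_origin p : equilibrium p (St 0 0 0 0).
Proof. unfold equilibrium, fV1, fA1, fV2, fA2; cbn; unfold Rdiv; repeat split; ring. Qed.

Lemma below_smaller_eigenvalue r al1 al2 e12 e21 : 0 <= e21 * e12 ->
  r < / 2 * (al1 + al2) - / 2 * sqrt ((al2 - al1) ^ 2 + 4 * e21 * e12) ->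
  r - al1 < 0 /\ 0 < (r - al1) * (r - al2) - e21 * e12.
Proof.
  intros He Hr; set (D := (al2 - al1) ^ 2 + 4 * e21 * e12) in *.
  assert (HD : 0 <= D) by (unfold D; pose proof (pow2_ge_0 (al2 - al1)); lra).
  pose proof (sqrt_pos D); pose proof (sqrt_sqrt D HD).
  assert (Hdet : 0 < (r - al1) * (r - al2) - e21 * e12).
  { assert ((r - al1) * (r - al2) - e21 * e12 = (/ 2 * (al1 + al2) - r) ^ 2 - D / 4)
      by (unfold D; field).
    nra. }
  split; [|exact Hdet].
  (* both factors have the same sign and their sum is negative *)
  nra.
Qed.

Theorem LAS_origin p : admissible p -> rA p < rA_min p -> LAS p (St 0 0 0 0).
Proof.
  intros Hp Hr.
  pose proof (admissible_rates_pos p Hp) as (P1 & P2 & P3 & P4 & _).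
  pose proof Hp as (_ & _ & _ & _ & _ & _ & _ & _ & _ & _ & _ & _ & _ & Hm1 & Hm2 & _).
  destruct (below_smaller_eigenvalue (rA p) (dAp12 p + muA1 p) (dAp21 p + muA2 p)
              (dAp12 p) (dAp21 p)) as [HA HdetA]; [nra | |].
  { unfold rA_min, rA_bar, Delta_rA in Hr.
    replace (dAp21 p + muA2 p - (dAp12 p + muA1 p)) with (dAp21 p - dAp12 p + muA2 p - muA1 p)
      by ring; lra. }
  apply LAS_of_Hurwitz_blocks; [exact Hp | apply equilibrium_origin | cbn; lra | cbn; lra | ..];
    cbn [jac_V1 jac_V2 jac_A1 jac_A2 sV1 sA1 sV2 sA2].
  all: rewrite ?Rmult_0_r, ?Rdiv_0_l, ?Rmult_0_r, ?Rmult_0_l, ?Rminus_0_r, ?Rplus_0_r,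
         ?Rdiv_1_r, ?Rmult_1_r.
  - lra.
  - nra.
  - lra.
  - lra.
Qed.

(* A Metzler matrix [[X1, e21], [e12, X2]] killing a positive vector has
   determinant 0; lowering its diagonal makes it Hurwitz. *)
Lemma hurwitz_of_positive_kernel x1 x2 X1 X2 t1 t2 e12 e21 :
  0 < x1 -> 0 < x2 -> 0 < t1 -> 0 < t2 -> 0 < e12 -> 0 < e21 ->
  X1 * x1 + e21 * x2 = 0 -> e12 * x1 + X2 * x2 = 0 ->
  X1 - t1 < 0 /\ 0 < (X1 - t1) * (X2 - t2) - e21 * e12.
Proof.
  intros Hx1 Hx2 Ht1 Ht2 He12 He21 K1 K2.
  assert (HX1 : X1 < 0) by nra.
  assert (HX2 : X2 < 0) by nra.
  assert (Hdet : X1 * X2 = e21 * e12).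
  { apply (Rmult_eq_reg_r (x1 * x2)); [|nra].
    replace (X1 * X2 * (x1 * x2)) with ((X1 * x1) * (X2 * x2)) by ring.
    replace (X1 * x1) with (- (e21 * x2)) by lra; replace (X2 * x2) with (- (e12 * x1)) by lra.
    ring. }
  split; nra.
Qed.

Section PositiveEquilibria.
Variables (p : params) (E : state).
Hypotheses (Hp : admissible p) (Heq : equilibrium p E)
           (HA1 : 0 < sA1 E) (HA2 : 0 < sA2 E).

Lemma animal_block_hurwitz :
  sA1 (jac_A1 p E) < 0 /\
  0 < sA1 (jac_A1 p E) * sA2 (jac_A2 p E) - dAp21 p * dAp12 p.
Proof.
  pose proof (admissible_rates_pos p Hp) as (_ & _ & P3 & P4 & P5 & P6).
  destruct Hp as (_ & HrA & _); destruct Heq as (_ & F2 & _ & F4).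
  cbn [jac_A1 jac_A2 sA1 sA2].
  replace (rA p * (1 - 2 * sA1 E / KAp1 p) - dAp12 p - muA1 p) with
    ((rA p * (1 - sA1 E / KAp1 p) - dAp12 p - muA1 p) - rA p * sA1 E / KAp1 p) by (field; lra).
  replace (rA p * (1 - 2 * sA2 E / KAp2 p) - dAp21 p - muA2 p) with
    ((rA p * (1 - sA2 E / KAp2 p) - dAp21 p - muA2 p) - rA p * sA2 E / KAp2 p) by (field; lra).
  apply (hurwitz_of_positive_kernel (sA1 E) (sA2 E)); try assumption;
    try (apply Rdiv_lt_0_compat; nra).
  - unfold fA1 in F2; rewrite <- F2; ring.
  - unfold fA2 in F4; rewrite <- F4; ring.
Qed.

Lemma vector_block_hurwitz : 0 < sV1 E -> 0 < sV2 E ->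
  sV1 (jac_V1 p E) < 0 /\
  0 < sV1 (jac_V1 p E) * sV2 (jac_V2 p E) - sV2 (jac_V1 p E) * sV1 (jac_V2 p E).
Proof.
  intros HV1 HV2.
  pose proof (admissible_rates_pos p Hp) as (P1 & P2 & _).
  pose proof (denominators_pos p E Hp (Rlt_le _ _ HA1) (Rlt_le _ _ HA2))
    as (D1 & D2 & D3 & D4 & D5 & D6 & _).
  destruct Hp as (HrV & _); destruct Heq as (F1 & _ & F3 & _).
  set (g1 := rV p * (sA1 E / (sA1 E + a1 p))); set (g2 := rV p * (sA2 E / (sA2 E + a2 p))).
  assert (0 < g1) by (apply Rmult_lt_0_compat, Rdiv_lt_0_compat; lra).
  assert (0 < g2) by (apply Rmult_lt_0_compat, Rdiv_lt_0_compat; lra).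
  cbn [jac_V1 jac_V2 sV1 sV2]; fold g1 g2.
  replace (g1 * (1 - 2 * sV1 E / KV1 p) - dVp12 p / (1 + b1 p * sA1 E) - muV1 p) with
    ((g1 * (1 - sV1 E / KV1 p) - dVp12 p / (1 + b1 p * sA1 E) - muV1 p) - g1 * sV1 E / KV1 p)
    by (field; lra).
  replace (g2 * (1 - 2 * sV2 E / KV2 p) - dVp21 p / (1 + b2 p * sA2 E) - muV2 p) with
    ((g2 * (1 - sV2 E / KV2 p) - dVp21 p / (1 + b2 p * sA2 E) - muV2 p) - g2 * sV2 E / KV2 p)
    by (field; lra).
  apply (hurwitz_of_positive_kernel (sV1 E) (sV2 E)); try assumption;
    try (apply Rdiv_lt_0_compat; nra).
  - unfold fV1 in F1; fold g1 in F1; rewrite <- F1; field; lra.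
  - unfold fV2 in F3; fold g2 in F3; rewrite <- F3; field; lra.
Qed.

End PositiveEquilibria.

Theorem LAS_vector_free p A1 A2 : admissible p -> 0 < A1 -> 0 < A2 ->
  equilibrium p (St 0 A1 0 A2) -> mB1 p A1 A2 < 0 -> 0 < mB2 p A1 A2 ->
  LAS p (St 0 A1 0 A2).
Proof.
  intros Hp HA1 HA2 Heq HB1 HB2.
  pose proof (admissible_rates_pos p Hp) as (P1 & P2 & _).
  pose proof (denominators_pos p (St 0 A1 0 A2) Hp (Rlt_le _ _ HA1) (Rlt_le _ _ HA2))
    as (D1 & D2 & D3 & D4 & D5 & D6 & _); cbn [sA1 sA2] in D1, D2, D3, D4.
  destruct (animal_block_hurwitz p (St 0 A1 0 A2)) as [HA HdetA]; auto.
  assert (E11 : sV1 (jac_V1 p (St 0 A1 0 A2)) = j11 p A1)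
    by (cbn; unfold j11; field; repeat split; lra).
  assert (E33 : sV2 (jac_V2 p (St 0 A1 0 A2)) = j33 p A2)
    by (cbn; unfold j33; field; repeat split; lra).
  assert (Hoff : 0 < dVp21 p / (1 + b2 p * A2) * (dVp12 p / (1 + b1 p * A1)))
    by (apply Rmult_lt_0_compat; apply Rdiv_lt_0_compat; lra).
  unfold mB1, mB2 in HB1, HB2.
  apply LAS_of_Hurwitz_blocks; auto; try (cbn; lra);
    rewrite ?E11, ?E33; cbn [jac_V1 jac_V2 sV1 sV2 sA1 sA2].
  - (* B2 > 0 forces j11 j33 > 0, and B1 < 0 then makes both negative *)
    nra.
  - lra.
Qed.

Theorem LAS_coexistence p E : admissible p ->
  0 < sV1 E -> 0 < sA1 E -> 0 < sV2 E -> 0 < sA2 E -> equilibrium p E -> LAS p E.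
Proof.
  intros Hp HV1 HA1 HV2 HA2 Heq.
  destruct (animal_block_hurwitz p E) as [HA HdetA]; auto.
  destruct (vector_block_hurwitz p E) as [HV HdetV]; auto.
  apply LAS_of_Hurwitz_blocks; auto; lra.
Qed.

Lemma root_right_of (g : R -> R) a b : a < b -> (forall z, ex_derive g z) ->
  0 < g a -> g b < 0 -> exists z, a < z /\ g z = 0.
Proof.
  intros Hab Hg Ha Hb.
  destruct (IVT (fun z => - g z) a b) as [z [Hz Hgz]]; [| exact Hab | lra | lra |].
  - intros z; apply continuity_pt_opp, continuity_pt_filterlim, (ex_derive_continuous g z), Hg.
  - exists z; split; [|lra]; destruct (Req_dec z a) as [->|]; lra.
Qed.

Lemma cubic_negative_at e s c : 0 < e -> 0 < c ->
  let u := 1 + (e + Rabs s) / c in 1 <= u /\ e + s * u - c * u ^ 3 < 0.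
Proof.
  intros He Hc u; pose proof (Rle_abs s); pose proof (Rabs_pos s).
  assert (Hu : 1 <= u).
  { unfold u; assert (0 <= (e + Rabs s) / c) by (apply Rdiv_le_0_compat; lra); lra. }
  split; [exact Hu|].
  assert (Hcu : c * u = c + e + Rabs s) by (unfold u; field; lra).
  assert (c * u ^ 2 <= c * u ^ 3).
  { apply Rmult_le_compat_l; [lra|]; replace (u ^ 3) with (u ^ 2 * u) by ring.
    pose proof (pow2_ge_0 u); nra. }
  nra.
Qed.

Lemma two_patch_logistic_equilibrium r1 r2 K1 K2 e12 e21 m1 m2 :
  0 < r1 -> 0 < r2 -> 0 < K1 -> 0 < K2 -> 0 < e12 -> 0 < e21 -> e12 + m1 <= r1 ->
  exists X1 X2, 0 < X1 /\ 0 < X2 /\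
    r1 * X1 * (1 - X1 / K1) - e12 * X1 + e21 * X2 - m1 * X1 = 0 /\
    r2 * X2 * (1 - X2 / K2) - e21 * X2 + e12 * X1 - m2 * X2 = 0.
Proof.
  intros Hr1 Hr2 HK1 HK2 He12 He21 Hs.
  set (s1 := r1 - e12 - m1); set (sg := r2 - e21 - m2).
  assert (Hs1 : 0 <= s1) by (unfold s1; lra).
  (* the first equation gives X2 = X1 * psi X1; the second then reads X1 * g X1 = 0 *)
  set (psi z := (r1 * z / K1 - s1) / e21).
  set (g z := e12 + sg * psi z - r2 * z * psi z ^ 2 / K2).
  set (a0 := K1 * s1 / r1).
  assert (Hpsi : forall z, a0 < z -> 0 < psi z).
  { intros z Hz; apply Rdiv_lt_0_compat; [|lra].
    apply (Rmult_lt_compat_l (r1 / K1)) in Hz; [|apply Rdiv_lt_0_compat; lra].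
    unfold a0 in Hz; replace (r1 / K1 * (K1 * s1 / r1)) with s1 in Hz by (field; lra).
    replace (r1 * z / K1) with (r1 / K1 * z) by (field; lra); lra. }
  enough (exists z, a0 < z /\ g z = 0) as [z [Hz Hgz]].
  { assert (Ha0 : 0 <= a0) by (apply Rdiv_le_0_compat; nra).
    exists z, (z * psi z); pose proof (Hpsi z Hz); split; [lra|]; split; [nra|]; split.
    - unfold psi, s1; field; lra.
    - replace (r2 * (z * psi z) * (1 - z * psi z / K2) - e21 * (z * psi z) + e12 * z
               - m2 * (z * psi z)) with (z * g z) by (unfold g, sg; field; lra).
      rewrite Hgz; ring. }
  set (c := r2 * K1 * e21 / (r1 * K2)).
  assert (Hc : 0 < c) by (unfold c; apply Rdiv_lt_0_compat; apply Rmult_lt_0_compat; nra).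
  destruct (cubic_negative_at e12 sg c He12 Hc) as [Hu Hneg]; set (u := 1 + _) in Hu, Hneg.
  set (xm := K1 * (s1 + e21 * u) / r1).
  apply root_right_of with xm.
  - unfold xm, a0; apply Rmult_lt_compat_r; [apply Rinv_0_lt_compat; lra|].
    assert (0 < e21 * u) by nra; nra.
  - intros z; unfold g, psi; auto_derive; exact I.
  - unfold g; cbv beta; replace (psi a0) with 0 by (unfold psi, a0; cbv beta; field; lra); lra.
  - unfold g; cbv beta; replace (psi xm) with u by (unfold psi, xm; cbv beta; field; lra).
    (* xm >= K1 e21 u / r1, so the last term of g xm is at least c u^3 *)
    assert (c * u ^ 3 <= r2 * xm * u ^ 2 / K2).
    { unfold c, xm, Rdiv; rewrite !Rinv_mult.
      assert (0 < / r1) by (apply Rinv_0_lt_compat; lra).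
      assert (0 < / K2) by (apply Rinv_0_lt_compat; lra).
      assert (0 <= r2 * K1 * s1 * / r1 * / K2 * u ^ 2).
      { apply Rmult_le_pos; [|apply pow2_ge_0]; repeat apply Rmult_le_pos; lra. }
      lra. }
    lra.
Qed.

Lemma exists_animal_equilibrium p : admissible p -> (1 <= Q0A1 p \/ 1 <= Q0A2 p) ->
  exists A1 A2, 0 < A1 /\ 0 < A2 /\ equilibrium p (St 0 A1 0 A2).
Proof.
  intros Hp HQ.
  pose proof (admissible_rates_pos p Hp) as (_ & _ & P3 & P4 & P5 & P6).
  pose proof Hp as (_ & HrA & _ & _ & _ & _ & _ & _ & _ & _ & _ & _ & _ & _ & _ & Hm1 & Hm2 & _).
  assert (Hfree : forall A1 A2, fA1 p (St 0 A1 0 A2) = 0 -> fA2 p (St 0 A1 0 A2) = 0 ->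
                    equilibrium p (St 0 A1 0 A2)).
  { intros A1 A2 F2 F4; repeat split; try assumption; unfold fV1, fV2; cbn; ring. }
  unfold Q0A1, Q0A2 in HQ; destruct HQ as [HQ|HQ]; apply Rle_div_r in HQ; try lra.
  - destruct (two_patch_logistic_equilibrium (rA p) (rA p) (KAp1 p) (KAp2 p) (dAp12 p) (dAp21 p)
                (muA1 p) (muA2 p)) as (X1 & X2 & HX1 & HX2 & E1 & E2); try lra.
    exists X1, X2; repeat split; try assumption; apply Hfree; assumption.
  - destruct (two_patch_logistic_equilibrium (rA p) (rA p) (KAp2 p) (KAp1 p) (dAp21 p) (dAp12 p)
                (muA2 p) (muA1 p)) as (X2 & X1 & HX2 & HX1 & E2 & E1); try lra.
    exists X1, X2; repeat split; try assumption; apply Hfree; assumption.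
Qed.

Lemma exists_coexistence_equilibrium p A1 A2 : admissible p -> 0 < A1 -> 0 < A2 ->
  equilibrium p (St 0 A1 0 A2) -> (1 <= S0V1 p A1 \/ 1 <= S0V2 p A2) ->
  exists V1 V2, 0 < V1 /\ 0 < V2 /\ equilibrium p (St V1 A1 V2 A2).
Proof.
  intros Hp HA1 HA2 (_ & F2 & _ & F4) HS.
  pose proof (admissible_rates_pos p Hp) as (P1 & P2 & _).
  pose proof (denominators_pos p (St 0 A1 0 A2) Hp (Rlt_le _ _ HA1) (Rlt_le _ _ HA2))
    as (D1 & D2 & D3 & D4 & D5 & D6 & _); cbn [sA1 sA2] in D1, D2, D3, D4.
  pose proof Hp as (HrV & _ & _ & _ & _ & _ & _ & _ & _ & _ & _ & _ & _ & Hm1 & Hm2 & _).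
  set (g1 := rV p * (A1 / (A1 + a1 p))); set (g2 := rV p * (A2 / (A2 + a2 p))).
  set (e12 := dVp12 p * (1 / (1 + b1 p * A1))); set (e21 := dVp21 p * (1 / (1 + b2 p * A2))).
  assert (0 < g1) by (apply Rmult_lt_0_compat, Rdiv_lt_0_compat; lra).
  assert (0 < g2) by (apply Rmult_lt_0_compat, Rdiv_lt_0_compat; lra).
  assert (0 < e12) by (apply Rmult_lt_0_compat, Rdiv_lt_0_compat; lra).
  assert (0 < e21) by (apply Rmult_lt_0_compat, Rdiv_lt_0_compat; lra).
  assert (Hequil : forall V1 V2,
    g1 * V1 * (1 - V1 / KV1 p) - e12 * V1 + e21 * V2 - muV1 p * V1 = 0 ->
    g2 * V2 * (1 - V2 / KV2 p) - e21 * V2 + e12 * V1 - muV2 p * V2 = 0 ->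
    equilibrium p (St V1 A1 V2 A2)) by (intros V1 V2 F1 F3; repeat split; assumption).
  unfold S0V1, S0V2 in HS; fold g1 g2 in HS;
    replace (dVp12 p / (1 + b1 p * A1)) with e12 in HS by (unfold e12; field; lra);
    replace (dVp21 p / (1 + b2 p * A2)) with e21 in HS by (unfold e21; field; lra).
  destruct HS as [HS|HS]; apply Rle_div_r in HS; try lra.
  - destruct (two_patch_logistic_equilibrium g1 g2 (KV1 p) (KV2 p) e12 e21 (muV1 p) (muV2 p))
      as (X1 & X2 & HX1 & HX2 & E1 & E2); try lra.
    exists X1, X2; repeat split; try assumption; apply Hequil; assumption.
  - destruct (two_patch_logistic_equilibrium g2 g1 (KV2 p) (KV1 p) e21 e12 (muV2 p) (muV1 p))
      as (X2 & X1 & HX2 & HX1 & E2 & E1); try lra.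
    exists X1, X2; repeat split; try assumption; apply Hequil; assumption.
Qed.

Theorem theorem3 (p : params) (Hp : admissible p) :
  (* 1. *)
  (equilibrium p (St 0 0 0 0) /\
   (rA p < rA_min p -> LAS p (St 0 0 0 0))) /\
  (* 2. *)
  ((1 <= Q0A1 p \/ 1 <= Q0A2 p) ->
     exists A1p A2p, 0 < A1p /\ 0 < A2p /\ equilibrium p (St 0 A1p 0 A2p)) /\
  (forall A1p A2p, 0 < A1p -> 0 < A2p -> equilibrium p (St 0 A1p 0 A2p) ->
     mB1 p A1p A2p < 0 -> 0 < mB2 p A1p A2p -> LAS p (St 0 A1p 0 A2p)) /\
  (* 3. *)
  ((1 <= Q0A1 p \/ 1 <= Q0A2 p) ->
     forall A1p A2p, 0 < A1p -> 0 < A2p -> equilibrium p (St 0 A1p 0 A2p) ->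
       (1 <= S0V1 p A1p \/ 1 <= S0V2 p A2p) ->
       exists V1p V2p, 0 < V1p /\ 0 < V2p /\ equilibrium p (St V1p A1p V2p A2p)) /\
  (forall E : state, 0 < sV1 E -> 0 < sA1 E -> 0 < sV2 E -> 0 < sA2 E ->
     equilibrium p E -> 0 < mC1 p E -> 0 < mC2 p E -> LAS p E).
Proof.
  split; [split; [apply equilibrium_origin | now apply LAS_origin]|].
  split; [now apply exists_animal_equilibrium|].
  split; [intros; now apply LAS_vector_free|].
  split; [intros _ A1 A2; now apply exists_coexistence_equilibrium|].
  intros E HV1 HA1 HV2 HA2 Heq _ _; now apply LAS_coexistence.
Qed.
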